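(* For every domino tiling system $\mathcal{D}=(\mathrm{Col},\mathrm{T},\mathrm{white})$ there exists an $\mathcal{ALCO}^{r\#s\#}_{\mathsf{reg}}$-concept $C^{\mathcal{D}}_{\mathrm{snake}}$, using only the role name $r$, the individual names $\mathsf{ld},\mathsf{rd},\mathsf{lu},\mathsf{ru}$ and the concept names $C_t$ ($t\in\mathrm{T}$), such that for every interpretation $\mathcal{I}$: $\mathcal{I}$ is a $\mathcal{D}$-pseudosnake if and only if $(C^{\mathcal{D}}_{\mathrm{snake}})^{\mathcal{I}}\neq\emptyset$.
   Context: $\mathcal{ALCO}^{r\#s\#}_{\mathsf{reg}}$: concepts built from $\top$, concept names, nominals $\{a\}$ ($\{a\}^{\mathcal{I}}=\{a^{\mathcal{I}}\}$), $\neg$, $\sqcap$, $\exists p.C$ for role names $p$, and $\exists\mathcal{L}.C$ where $\mathcal{L}$ is either a regular language over role names and tests $A?$, or the language $\{r^ns^n\mid n\in\mathbb{N}\}$ for fixed role names $r$ (call) and $s$ (return); $(\exists\mathcal{L}.C)^{\mathcal{I}}$ is the set of elements from which there is a path reading a word of $\mathcal{L}$ (role letters follow edges, tests $A?$ stay in place at an element of $A^{\mathcal{I}}$) ending in $C^{\mathcal{I}}$. A domino tiling system is $\mathcal{D}=(\mathrm{Col},\mathrm{T},\mathrm{white})$ with $\mathrm{T}\subseteq\mathrm{Col}^4$ of tiles $(c_l,c_d,c_r,c_u)$ (throughout, no tile has more than two white sides). A tile is left-/down-/right-/up-border if $c_l$/$c_d$/$c_r$/$c_u$ is white; $t,t'$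 are H-compatible if $c_r=c'_l$. An element carries $t$ if it lies in $C_t^{\mathcal{I}}$; the named elements are $\mathsf{ld}^{\mathcal{I}},\mathsf{rd}^{\mathcal{I}},\mathsf{lu}^{\mathcal{I}},\mathsf{ru}^{\mathcal{I}}$. $\mathcal{I}$ is a $\mathcal{D}$-pseudosnake if: (SPath) there is an $r^+$-path starting at $\mathsf{ld}^{\mathcal{I}}$, later passing $\mathsf{rd}^{\mathcal{I}}$, later $\mathsf{lu}^{\mathcal{I}}$, ending at $\mathsf{ru}^{\mathcal{I}}$; (SNoLoop) no named element $r^+$-reaches itself; (SUniqTil) every element $r^*$-reachable from $\mathsf{ld}^{\mathcal{I}}$ carries exactly one tile; (SSpecTil) the named elements are exactly the elements $r^*$-reachable from $\mathsf{ld}^{\mathcal{I}}$ carrying a tile with two white sides, and $\mathsf{ld}^{\mathcal{I}},\mathsf{rd}^{\mathcal{I}},\mathsf{lu}^{\mathcal{I}},\mathsf{ru}^{\mathcal{I}}$ carry respectively a left-and-down-border, right-and-down-border, left-and-up-border, right-and-up-border tile; (SHori) every element $d\neq\mathsf{ru}^{\mathcal{I}}$ $r^*$-reachable from $\mathsf{ld}^{\mathcal{I}}$ carrying $t=(c_l,c_d,c_r,c_u)$ has a tile $t'=(c'_l,c'_d,c'_r,c'_u)$ carried by all its $r$-successors with (i) $t,t'$ H-compatible, (ii) if $c_d$ is white then ($c_r$ not white iff $c'_d$ white), (iii) if $c_u$ white then $c'_u$ white. *)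

From mathcomp Require Import all_boot.
From Stdlib Require Import Relations.

Set Implicit Arguments.
Unset Strict Implicit.
Unset Printing Implicit Defensive.

Inductive letter (CN RN : Type) : Type :=
| LRole of RN
| LTest of CN.

Inductive regex (CN RN : Type) : Type :=
| RVoid
| REps
| RLet of letter CN RN
| RCat of regex CN RN & regex CN RN
| RAlt of regex CN RN & regex CN RN
| RStar of regex CN RN.

Inductive matches (CN RN : Type) : regex CN RN -> seq (letter CN RN) -> Prop :=
| m_eps : matches (REps CN RN) [::]
| m_let l : matches (RLet l) [:: l]
| m_cat e1 e2 w1 w2 : matches e1 w1 -> matches e2 w2 -> matches (RCat e1 e2) (w1 ++ w2)
| m_altl e1 e2 w : matches e1 w -> matches (RAlt e1 e2) w
| m_altr e1 e2 w : matches e2 w -> matches (RAlt e1 e2) w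
| m_star0 e : matches (RStar e) [::]
| m_starS e w1 w2 : matches e w1 -> matches (RStar e) w2 -> matches (RStar e) (w1 ++ w2).

(* the languages allowed in existential restrictions: a regular language,
   or the non-regular language { r^n s^n | n } for the fixed roles r, s *)
Inductive lang (CN RN : Type) : Type :=
| LReg of regex CN RN
| LNest.

Definition in_lang (CN RN : Type) (r s : RN) (L : lang CN RN)
  (w : seq (letter CN RN)) : Prop :=
  match L with
  | LReg e => matches e w
  | LNest => exists n, w = nseq n (LRole CN r) ++ nseq n (LRole CN s)
  end.

Inductive concept (CN RN IN : Type) : Type :=
| CTop
| CName of CN
| CNom of IN
| CNeg of concept CN RN IN
| CAnd of concept CN RN IN & concept CN RN IN
| CExRole of RN & concept CN RN IN
| CExLang of lang CN RN & concept CN RN IN.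

Record interp (CN RN IN : Type) (D : Type) : Type := Interp {
  cI : CN -> D -> Prop;
  rI : RN -> D -> D -> Prop;
  iI : IN -> D
}.

Fixpoint reads (CN RN IN D : Type) (I : interp CN RN IN D)
  (w : seq (letter CN RN)) (x y : D) : Prop :=
  match w with
  | [::] => x = y
  | LRole p :: w' => exists z, rI I p x z /\ reads I w' z y
  | LTest A :: w' => cI I A x /\ reads I w' x y
  end.

Fixpoint sem (CN RN IN D : Type) (r s : RN) (I : interp CN RN IN D)
  (C : concept CN RN IN) (x : D) : Prop :=
  match C with
  | CTop => True
  | CName A => cI I A x
  | CNom a => x = iI I a
  | CNeg C1 => ~ sem r s I C1 x
  | CAnd C1 C2 => sem r s I C1 x /\ sem r s I C2 x
  | CExRole p C1 => exists y, rI I p x y /\ sem r s I C1 y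
  | CExLang L C1 => exists w y, in_lang r s L w /\ reads I w x y /\ sem r s I C1 y
  end.

Definition letter_ok (CN RN : Type) (PC : CN -> Prop) (PR : RN -> Prop)
  (l : letter CN RN) : Prop :=
  match l with LRole p => PR p | LTest A => PC A end.

Fixpoint regex_ok (CN RN : Type) (PC : CN -> Prop) (PR : RN -> Prop)
  (e : regex CN RN) : Prop :=
  match e with
  | RVoid | REps => True
  | RLet l => letter_ok PC PR l
  | RCat e1 e2 | RAlt e1 e2 => regex_ok PC PR e1 /\ regex_ok PC PR e2
  | RStar e1 => regex_ok PC PR e1
  end.

Definition lang_ok (CN RN : Type) (r s : RN) (PC : CN -> Prop) (PR : RN -> Prop)
  (L : lang CN RN) : Prop :=
  match L with LReg e => regex_ok PC PR e | LNest => PR r /\ PR s end.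

Fixpoint uses_only (CN RN IN : Type) (r s : RN) (PC : CN -> Prop)
  (PR : RN -> Prop) (PI : IN -> Prop) (C : concept CN RN IN) : Prop :=
  match C with
  | CTop => True
  | CName A => PC A
  | CNom a => PI a
  | CNeg C1 => uses_only r s PC PR PI C1
  | CAnd C1 C2 => uses_only r s PC PR PI C1 /\ uses_only r s PC PR PI C2
  | CExRole p C1 => PR p /\ uses_only r s PC PR PI C1
  | CExLang L C1 => lang_ok r s PC PR L /\ uses_only r s PC PR PI C1
  end.

Notation tile Col := (Col * Col * Col * Col)%type.

Section Tiles.
Variable Col : eqType.
Definition c_l (t : tile Col) : Col := t.1.1.1.
Definition c_d (t : tile Col) : Col := t.1.1.2.
Definition c_r (t : tile Col) : Col := t.1.2.
Definition c_u (t : tile Col) : Col := t.2.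

Definition nwhite (white : Col) (t : tile Col) : nat :=
  (c_l t == white) + (c_d t == white) + (c_r t == white) + (c_u t == white).

Definition H_compatible (t t' : tile Col) : Prop := c_r t = c_l t'.
End Tiles.

Section Snake.
Variables (Col : finType) (T : {set tile Col}) (white : Col).
Variables (CN RN IN : Type) (r : RN) (Ct : tile Col -> CN) (ld rd lu ru : IN).
Variables (D : Type) (I : interp CN RN IN D).

Let R := rI I r.
Let ldI := iI I ld.
Let rdI := iI I rd.
Let luI := iI I lu.
Let ruI := iI I ru.

Definition reachable (d : D) : Prop := clos_refl_trans D R ldI d.
Definition carries (t : tile Col) (d : D) : Prop := cI I (Ct t) d.
Definition named (d : D) : Prop := d = ldI \/ d = rdI \/ d = luI \/ d = ruI.

Definition SPath : Prop :=
  clos_trans D R ldI rdI /\ clos_trans D R rdI luI /\ clos_trans D R luI ruI.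

Definition SNoLoop : Prop :=
  forall d, named d -> ~ clos_trans D R d d.

Definition SUniqTil : Prop :=
  forall d, reachable d ->
    exists t, [/\ t \in T, carries t d &
                  forall t', t' \in T -> carries t' d -> t' = t].

Definition SSpecTil : Prop :=
  (forall d, named d <->
     (reachable d /\ exists t, [/\ t \in T, carries t d & nwhite white t = 2]))
  /\ (exists t, [/\ t \in T, carries t ldI, c_l t = white & c_d t = white])
  /\ (exists t, [/\ t \in T, carries t rdI, c_r t = white & c_d t = white])
  /\ (exists t, [/\ t \in T, carries t luI, c_l t = white & c_u t = white])
  /\ (exists t, [/\ t \in T, carries t ruI, c_r t = white & c_u t = white]).

Definition SHori : Prop :=
  forall d, reachable d -> d <> ruI ->
  forall t, t \in T -> carries t d ->
    exists t', [/\ t' \in T,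
      (forall e, R d e -> carries t' e),
      H_compatible t t',
      (c_d t = white -> (c_r t <> white <-> c_d t' = white)) &
      (c_u t = white -> c_u t' = white)].

Definition pseudosnake : Prop :=
  [/\ SPath, SNoLoop, SUniqTil, SSpecTil & SHori].
End Snake.

From Stdlib Require Import Relations Classical.
From mathcomp Require Import all_boot.

Set Implicit Arguments.
Unset Strict Implicit.
Unset Printing Implicit Defensive.

(* Every condition of a pseudosnake is either about the four named elements,
   which the concept reaches from [ld] through nominals and [r*]/[r+]
   restrictions, or is a local tiling condition at one element, which is
   imposed on everything [r*]-reachable from [ld] by a universal [r*]
   restriction; the conjunct [{ld}] pins the witness of non-emptiness to [ld].
   Uniqueness of tiles, the horizontal successor condition and the corner
   types are finite Boolean combinations over the tile set. *)

Section DerivedConstructors.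
Variables CN RN IN : Type.
Implicit Types (C : concept CN RN IN) (p : RN).

Definition cBot : concept CN RN IN := CNeg (CTop CN RN IN).
Definition cOr C1 C2 := CNeg (CAnd (CNeg C1) (CNeg C2)).
Definition cImp C1 C2 := CNeg (CAnd C1 (CNeg C2)).
Definition cAll p C := CNeg (CExRole p (CNeg C)).
Definition cBigOr (A : Type) (l : seq A) (f : A -> concept CN RN IN) :=
  foldr (fun a C => cOr (f a) C) cBot l.
Definition cBigAnd (A : Type) (l : seq A) (f : A -> concept CN RN IN) :=
  foldr (fun a C => CAnd (f a) C) (CTop CN RN IN) l.
Definition cExStar p C := CExLang (LReg (RStar (RLet (LRole CN p)))) C.
Definition cExPlus p C := CExRole p (cExStar p C).
Definition cAllStar p C := CNeg (cExStar p (CNeg C)).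

Section UsesOnly.
Variables (r s : RN) (PC : CN -> Prop) (PR : RN -> Prop) (PI : IN -> Prop).
Local Notation ok := (uses_only r s PC PR PI).

Lemma uses_only_cBigOr (A : eqType) (l : seq A) f :
  (forall a, a \in l -> ok (f a)) -> ok (cBigOr l f).
Proof.
elim: l => [//|a l IHl] fP /=; split; first by apply: fP; rewrite inE eqxx.
by apply: IHl => b bl; apply: fP; rewrite inE bl orbT.
Qed.

Lemma uses_only_cBigAnd (A : eqType) (l : seq A) f :
  (forall a, a \in l -> ok (f a)) -> ok (cBigAnd l f).
Proof.
elim: l => [//|a l IHl] fP /=; split; first by apply: fP; rewrite inE eqxx.
by apply: IHl => b bl; apply: fP; rewrite inE bl orbT.
Qed.

End UsesOnly.
End DerivedConstructors.

Lemma matches_RLet (CN RN : Type) (l : letter CN RN) w :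
  matches (RLet l) w -> w = [:: l].
Proof. by inversion 1. Qed.

Lemma clos_trans_step_rt (A : Type) (R : relation A) x y :
  clos_trans A R x y <-> exists z, R x z /\ clos_refl_trans A R z y.
Proof.
split=> [xy | [z [xz zy]]].
  case: (clos_trans_t1n _ _ _ _ xy) => [z xz | z w xz zw]; exists z; split=> //.
    exact: rt_refl.
  exact/clos_t_clos_rt/clos_t1n_trans.
elim/clos_refl_trans_ind_left: zy => [|u v _ xu uv]; first exact: t_step.
exact: t_trans xu (t_step _ _ _ _ uv).
Qed.

Section DerivedSemantics.
Variables (CN RN IN D : Type) (r s : RN) (I : interp CN RN IN D).
Local Notation semI := (sem r s I).
Implicit Types (C : concept CN RN IN) (p : RN) (x y : D).

(* Used as a view: destructuring [semI (CAnd _ _) x] directly unfolds the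
   inner [sem] calls, after which the other [sem_*] views no longer apply. *)
Lemma sem_CAnd C1 C2 x : semI (CAnd C1 C2) x <-> semI C1 x /\ semI C2 x.
Proof. by []. Qed.

Lemma sem_cOr C1 C2 x : semI (cOr C1 C2) x <-> semI C1 x \/ semI C2 x.
Proof. by split=> /= [?|]; [apply: NNPP | ]; tauto. Qed.

Lemma sem_cImp C1 C2 x : semI (cImp C1 C2) x <-> (semI C1 x -> semI C2 x).
Proof. by split=> /= [? ?|]; [apply: NNPP | ]; tauto. Qed.

Lemma sem_cAll p C x : semI (cAll p C) x <-> forall y, rI I p x y -> semI C y.
Proof.
split=> /= [xC y xy | xC [y [xy /(_ (xC y xy))]]] //.
by apply: NNPP => yC; apply: xC; exists y.
Qed.

Lemma sem_cBigOr (A : eqType) (l : seq A) f x :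
  semI (cBigOr l f) x <-> exists2 a, a \in l & semI (f a) x.
Proof.
elim: l => [|a l IHl]; first by split=> [[]|[]].
rewrite [cBigOr _ _]/= sem_cOr IHl; split=> [[fa|[b bl fb]] | [b]].
- by exists a; rewrite ?inE ?eqxx.
- by exists b; rewrite // inE bl orbT.
by rewrite inE => /orP[/eqP-> | bl] fb; [left | right; exists b].
Qed.

Lemma sem_cBigAnd (A : eqType) (l : seq A) f x :
  semI (cBigAnd l f) x <-> forall a, a \in l -> semI (f a) x.
Proof.
elim: l => [|a l IHl] /=; first by [].
rewrite IHl; split=> [[fa fl] b | fl].
- by rewrite inE => /orP[/eqP-> | /fl].
by split=> [|b bl]; apply: fl; rewrite inE ?eqxx ?bl ?orbT.
Qed.

Lemma reads_star_role p x y :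
  (exists2 w, matches (RStar (RLet (LRole CN p))) w & reads I w x y) <->
  clos_refl_trans D (rI I p) x y.
Proof.
split=> [[w] | xy].
  move E: (RStar _) => e m; elim: m E x => // {e w}.
    by move=> _ _ x /= ->; apply: rt_refl.
  move=> e w1 w2 m1 _ _ IH [E] x; subst e.
  rewrite (matches_RLet m1) /= => -[z [xz zy]].
  exact: rt_trans (rt_step _ _ _ _ xz) (IH erefl _ zy).
elim: (clos_rt_rt1n _ _ _ _ xy) => [|u v w uv _ [l m vw]].
  by exists [::]; [apply: m_star0 |].
by exists (LRole CN p :: l); [apply: (m_starS (m_let _) m) | exists v].
Qed.

Lemma sem_cExStar p C x :
  semI (cExStar p C) x <-> exists y, clos_refl_trans D (rI I p) x y /\ semI C y.
Proof.
split=> [[w [y [m [xy yC]]]] | [y [/reads_star_role[w m xy] yC]]]; last by exists w, y.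
by exists y; split=> //; apply/reads_star_role; exists w.
Qed.

Lemma sem_cExPlus p C x :
  semI (cExPlus p C) x <-> exists y, clos_trans D (rI I p) x y /\ semI C y.
Proof.
split=> [[z [xz /sem_cExStar[y [zy yC]]]] | [y [/clos_trans_step_rt[z [xz zy]] yC]]].
  by exists y; split=> //; apply/clos_trans_step_rt; exists z.
by exists z; split=> //; apply/sem_cExStar; exists y.
Qed.

Lemma sem_cAllStar p C x :
  semI (cAllStar p C) x <-> forall y, clos_refl_trans D (rI I p) x y -> semI C y.
Proof.
rewrite -[semI (cAllStar p C) x]/(~ semI (cExStar p (CNeg C)) x) sem_cExStar.
split=> [xC y xy | xC [y [xy yC]]]; last exact: yC (xC y xy).
by apply: NNPP => yC; apply: xC; exists y.
Qed.

Lemma sem_cExStar_at p a C x :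
  semI (cExStar p (CAnd (CNom CN RN a) C)) x <->
  clos_refl_trans D (rI I p) x (iI I a) /\ semI C (iI I a).
Proof.
rewrite sem_cExStar; split=> [[y [xy [Ey yC]]] | [xa aC]]; last by exists (iI I a).
by subst y.
Qed.

Lemma sem_cExPlus_at p a C x :
  semI (cExPlus p (CAnd (CNom CN RN a) C)) x <->
  clos_trans D (rI I p) x (iI I a) /\ semI C (iI I a).
Proof.
rewrite sem_cExPlus; split=> [[y [xy [Ey yC]]] | [xa aC]]; last by exists (iI I a).
by subst y.
Qed.

Lemma sem_cExPlus_nom p a x :
  semI (cExPlus p (CNom CN RN a)) x <-> clos_trans D (rI I p) x (iI I a).
Proof.
by rewrite sem_cExPlus; split=> [[y [xy <-]] | xa] //; exists (iI I a).
Qed.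

End DerivedSemantics.

Definition snake_next (Col : eqType) (white : Col) (t t' : tile Col) : bool :=
  [&& c_r t == c_l t', (c_d t == white) ==> ((c_r t != white) == (c_d t' == white))
    & (c_u t == white) ==> (c_u t' == white)].

Lemma snake_nextP (Col : eqType) (white : Col) (t t' : tile Col) :
  reflect [/\ H_compatible t t', c_d t = white -> (c_r t <> white <-> c_d t' = white)
            & c_u t = white -> c_u t' = white]
          (snake_next white t t').
Proof.
rewrite /snake_next /H_compatible.
case: (c_r t =P c_l t') => ?; case: (c_d t =P white) => ?; case: (c_r t =P white) => ?;
  case: (c_d t' =P white) => ?; case: (c_u t =P white) => ?; case: (c_u t' =P white) => ? /=;
  first [by constructor 1; split; tauto | by constructor 2; case; tauto].
Qed.

Section SnakeConcept.
Variables (Col : finType) (T : {set tile Col}) (white : Col).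
Variables (CN RN IN : Type) (r : RN) (Ct : tile Col -> CN) (ld rd lu ru : IN).

Local Notation concept := (concept CN RN IN).
Local Notation nom a := (CNom CN RN a).

Definition tileC t : concept := CName RN IN (Ct t).
Definition tilesC (P : pred (tile Col)) : concept :=
  cBigOr [seq t <- enum T | P t] tileC.
Definition namedC : concept := cOr (nom ld) (cOr (nom rd) (cOr (nom lu) (nom ru))).

Definition uniqTileC : concept :=
  cBigOr (enum T) (fun t =>
    CAnd (tileC t) (cBigAnd [seq t' <- enum T | t' != t] (fun t' => CNeg (tileC t')))).

Definition horiC : concept :=
  cImp (CNeg (nom ru)) (cBigAnd (enum T) (fun t =>
    cImp (tileC t)
      (cBigOr [seq t' <- enum T | snake_next white t t'] (fun t' => cAll r (tileC t'))))).

Definition localC : concept :=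
  CAnd uniqTileC (CAnd (cImp (tilesC (fun t => nwhite white t == 2)) namedC) horiC).

Definition pathC : concept :=
  cExPlus r (CAnd (nom rd) (cExPlus r (CAnd (nom lu) (cExPlus r (nom ru))))).

Definition noLoopC a : concept := CNeg (cExStar r (CAnd (nom a) (cExPlus r (nom a)))).

Definition cornerC a (f g : tile Col -> Col) : concept :=
  cExStar r (CAnd (nom a)
    (tilesC (fun t => [&& f t == white, g t == white & nwhite white t == 2]))).

Definition noLoopsC : concept :=
  CAnd (noLoopC ld) (CAnd (noLoopC rd) (CAnd (noLoopC lu) (noLoopC ru))).

Definition cornersC : concept :=
  CAnd (cornerC ld (@c_l _) (@c_d _)) (CAnd (cornerC rd (@c_r _) (@c_d _))
    (CAnd (cornerC lu (@c_l _) (@c_u _)) (cornerC ru (@c_r _) (@c_u _)))).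

Definition snakeC : concept :=
  CAnd (nom ld) (CAnd pathC (CAnd noLoopsC (CAnd cornersC (cAllStar r localC)))).

Lemma snakeC_uses_only s :
  uses_only r s (fun A => exists2 t, t \in T & A = Ct t) (fun p => p = r)
    (fun a => a = ld \/ a = rd \/ a = lu \/ a = ru) snakeC.
Proof.
have tileP P t : t \in [seq t <- enum T | P t] -> exists2 t', t' \in T & Ct t = Ct t'.
  by rewrite mem_filter mem_enum => /andP[_ tT]; exists t.
have tilesP P : uses_only r s (fun A => exists2 t, t \in T & A = Ct t) (fun p => p = r)
    (fun a => a = ld \/ a = rd \/ a = lu \/ a = ru) (tilesC P).
  by apply: uses_only_cBigOr => t /tileP.
rewrite /snakeC /=; do !split; try tauto; try exact: tilesP.
  apply: uses_only_cBigOr => t; rewrite mem_enum => tT /=.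
  by split; [exists t | apply: uses_only_cBigAnd => t' /tileP].
apply: uses_only_cBigAnd => t; rewrite mem_enum => tT /=.
by split; [exists t | apply: uses_only_cBigOr => t' /tileP].
Qed.

Section SnakeSemantics.
Variables (s : RN) (D : Type) (I : interp CN RN IN D).
Local Notation semI := (sem r s I).
Local Notation R := (rI I r).

Lemma sem_tilesC P x :
  semI (tilesC P) x <-> exists t, [/\ t \in T, P t & carries Ct I t x].
Proof.
rewrite sem_cBigOr; split=> [[t] | [t [tT Pt tx]]].
  by rewrite mem_filter mem_enum => /andP[Pt tT] tx; exists t.
by exists t; rewrite // mem_filter mem_enum Pt.
Qed.

Lemma sem_namedC x : semI namedC x <-> named ld rd lu ru I x.
Proof. by rewrite !sem_cOr. Qed.

Lemma sem_uniqTileC x :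
  semI uniqTileC x <->
  exists t, [/\ t \in T, carries Ct I t x &
                forall t', t' \in T -> carries Ct I t' x -> t' = t].
Proof.
rewrite sem_cBigOr; split=> [[t tT [tx /sem_cBigAnd others]] | [t [tT tx tuniq]]].
  exists t; rewrite -mem_enum; split=> // t' t'T; apply: contraPeq => t't.
  by apply: others; rewrite mem_filter t't mem_enum.
exists t; first by rewrite mem_enum.
split=> //; apply/sem_cBigAnd => t'; rewrite mem_filter mem_enum => /andP[t't t'T] t'x.
by rewrite (tuniq t' t'T t'x) eqxx in t't.
Qed.

Lemma sem_horiC x :
  semI horiC x <->
  (x <> iI I ru -> forall t, t \in T -> carries Ct I t x ->
     exists t', [/\ t' \in T, (forall e, R x e -> carries Ct I t' e), H_compatible t t',
                   (c_d t = white -> (c_r t <> white <-> c_d t' = white)) &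
                   (c_u t = white -> c_u t' = white)]).
Proof.
rewrite sem_cImp; split=> hori xru.
  move=> t tT tx; have /sem_cBigAnd/(_ t) := hori xru.
  rewrite mem_enum => /(_ tT)/sem_cImp/(_ tx)/sem_cBigOr[t'].
  rewrite mem_filter mem_enum => /andP[/snake_nextP[comp d u] t'T] /sem_cAll succ.
  by exists t'.
apply/sem_cBigAnd => t; rewrite mem_enum => tT; apply/sem_cImp => tx.
have [t' [t'T succ comp d u]] := hori xru t tT tx.
apply/sem_cBigOr; exists t'; last exact/sem_cAll.
by rewrite mem_filter mem_enum t'T andbT; apply/snake_nextP.
Qed.

Lemma sem_pathC x :
  semI pathC x <->
  clos_trans D R x (iI I rd) /\ clos_trans D R (iI I rd) (iI I lu) /\
  clos_trans D R (iI I lu) (iI I ru).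
Proof. by rewrite !sem_cExPlus_at sem_cExPlus_nom. Qed.

Lemma sem_noLoopC a x :
  semI (noLoopC a) x <->
  (clos_refl_trans D R x (iI I a) -> ~ clos_trans D R (iI I a) (iI I a)).
Proof.
rewrite -[semI _ x]/(~ semI (cExStar r (CAnd (nom a) (cExPlus r (nom a)))) x).
by rewrite sem_cExStar_at sem_cExPlus_nom; tauto.
Qed.

Lemma sem_cornerC a f g x :
  semI (cornerC a f g) x <->
  clos_refl_trans D R x (iI I a) /\
  exists t, [/\ t \in T, carries Ct I t (iI I a), f t = white, g t = white &
                nwhite white t = 2].
Proof.
rewrite sem_cExStar_at sem_tilesC.
split=> [[xa [t [tT /and3P[/eqP ft /eqP gt /eqP t2] ta]]] | [xa [t [tT ta ft gt t2]]]].
  by split=> //; exists t.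
by split=> //; exists t; rewrite ft gt t2 !eqxx.
Qed.

Lemma sem_cAllStar_localC :
  semI (cAllStar r localC) (iI I ld) <->
  [/\ SUniqTil T r Ct ld I,
      (forall d, reachable r ld I d ->
         (exists t, [/\ t \in T, carries Ct I t d & nwhite white t = 2]) ->
         named ld rd lu ru I d)
    & SHori T white r Ct ld ru I].
Proof.
rewrite sem_cAllStar; split=> [local | [uniq special_named hori] d dR].
  split.
  - by move=> d /local/sem_CAnd[/sem_uniqTileC].
  - move=> d /local/sem_CAnd[_ /sem_CAnd[/sem_cImp special_named _]] [t [tT td t2]].
    by apply/sem_namedC/special_named/sem_tilesC; exists t; split=> //; apply/eqP.
  - by move=> d /local/sem_CAnd[_ /sem_CAnd[_ /sem_horiC]].
apply/sem_CAnd; split; first exact/sem_uniqTileC/uniq.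
apply/sem_CAnd; split; last exact/sem_horiC/hori.
apply/sem_cImp => /sem_tilesC[t [tT /eqP t2 td]].
by apply/sem_namedC/special_named => //; exists t.
Qed.

Lemma named_reachable :
  SPath r ld rd lu ru I -> forall d, named ld rd lu ru I d -> reachable r ld I d.
Proof.
case=> [ldrd [rdlu luru]] d.
have ldlu := rt_trans _ _ _ _ _ (clos_t_clos_rt _ _ _ _ ldrd) (clos_t_clos_rt _ _ _ _ rdlu).
have ldru := rt_trans _ _ _ _ _ ldlu (clos_t_clos_rt _ _ _ _ luru).
by case=> [->|[->|[->|->]]]; [apply: rt_refl | apply: clos_t_clos_rt | |].
Qed.

Lemma sem_noLoopsC :
  SPath r ld rd lu ru I -> semI noLoopsC (iI I ld) <-> SNoLoop r ld rd lu ru I.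
Proof.
move=> /named_reachable reach; rewrite !sem_CAnd !sem_noLoopC /SNoLoop /=.
split=> [[nl1 [nl2 [nl3 nl4]]] d | noloop]; last first.
  by repeat split; move=> _; apply: noloop; rewrite /named; tauto.
by case=> [->|[->|[->|->]]]; [apply: nl1 | apply: nl2 | apply: nl3 | apply: nl4];
  apply: reach; rewrite /named; tauto.
Qed.

Lemma sem_cornerC_reachable a f g :
  SUniqTil T r Ct ld I -> reachable r ld I (iI I a) ->
  semI (cornerC a f g) (iI I ld) <->
  (exists t, [/\ t \in T, carries Ct I t (iI I a), f t = white & g t = white]) /\
  (exists t, [/\ t \in T, carries Ct I t (iI I a) & nwhite white t = 2]).
Proof.
move=> uniq aR; rewrite sem_cornerC.
split=> [[_ [t [tT ta ft gt t2]]] | [[t [tT ta ft gt]] [t' [t'T t'a t'2]]]].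
  by split; exists t.
split=> //; exists t; split=> //.
have [t0 [_ _ uniq0]] := uniq _ aR.
by rewrite (uniq0 t tT ta) -(uniq0 t' t'T t'a).
Qed.

Lemma sem_cornersC :
  SPath r ld rd lu ru I -> SUniqTil T r Ct ld I ->
  semI cornersC (iI I ld) <->
  (forall d, named ld rd lu ru I d ->
     exists t, [/\ t \in T, carries Ct I t d & nwhite white t = 2]) /\
  (exists t, [/\ t \in T, carries Ct I t (iI I ld), c_l t = white & c_d t = white]) /\
  (exists t, [/\ t \in T, carries Ct I t (iI I rd), c_r t = white & c_d t = white]) /\
  (exists t, [/\ t \in T, carries Ct I t (iI I lu), c_l t = white & c_u t = white]) /\
  (exists t, [/\ t \in T, carries Ct I t (iI I ru), c_r t = white & c_u t = white]).
Proof.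
move=> /named_reachable reach uniq.
rewrite !sem_CAnd !(sem_cornerC_reachable _ _ uniq (reach _ _)) /named; try tauto.
split=> [[[A1 S1] [[A2 S2] [[A3 S3] [A4 S4]]]] | [named_special [A1 [A2 [A3 A4]]]]].
  by split=> // d [->|[->|[->|->]]].
by split; [|split; [|split]]; split=> //; apply: named_special; tauto.
Qed.

Lemma sem_snakeC x :
  semI snakeC x <-> x = iI I ld /\ pseudosnake T white r Ct ld rd lu ru I.
Proof.
rewrite !sem_CAnd sem_pathC.
split=> [[-> [path [noloops [corners /sem_cAllStar_localC[uniq special_named hori]]]]] |
         [-> [path noloop uniq [named_iff corners] hori]]].
  move/(sem_noLoopsC path): noloops => noloop.
  move/(sem_cornersC path uniq): corners => [named_special corners].
  split=> //; split=> //; split=> // d.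
  split=> [nd | [dR sd]]; last exact: special_named.
  by split; [exact: named_reachable | exact: named_special].
split=> //; split=> //; split; first exact/sem_noLoopsC.
split; first by apply/(sem_cornersC path uniq); split=> // d /named_iff[].
by apply/sem_cAllStar_localC; split=> // d dR sd; apply/named_iff.
Qed.

End SnakeSemantics.
End SnakeConcept.

Theorem lemma4p5
  (Col : finType) (T : {set tile Col}) (white : Col)
  (HT : forall t, t \in T -> nwhite white t <= 2)
  (CN RN IN : Type) (r s : RN) (Hrs : r <> s)
  (Ct : tile Col -> CN) (HCt : {in T &, injective Ct})
  (ld rd lu ru : IN)
  (Hld_rd : ld <> rd) (Hld_lu : ld <> lu) (Hld_ru : ld <> ru)
  (Hrd_lu : rd <> lu) (Hrd_ru : rd <> ru) (Hlu_ru : lu <> ru) :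
  exists C : concept CN RN IN,
    uses_only r s (fun A => exists2 t, t \in T & A = Ct t) (fun p => p = r)
      (fun a => a = ld \/ a = rd \/ a = lu \/ a = ru) C /\
    forall (D : Type) (I : interp CN RN IN D),
      pseudosnake T white r Ct ld rd lu ru I <-> exists x : D, sem r s I C x.
Proof.
exists (snakeC T white r Ct ld rd lu ru); split; first exact: snakeC_uses_only.
move=> D I; split=> [snake | [x /sem_snakeC[]]] //.
by exists (iI I ld); apply/sem_snakeC.
Qed.
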